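(* Let $K$ be an algebraically closed field, $m\ge1$ and $2\le a\le b$ integers with $a\ne0$ in $K$, $S=K[[x,y_1,\dots,y_m]]$, $g=g(y_1,\dots,y_m)\in(\underline{y})^b\setminus(\underline{y})^{b+1}$, $A=S/(x^a-g)$, $Q=(y_1,\dots,y_m)A$. Let $d=\gcd(a,b)$, $a'=a/d$, $b'=b/d$, $n_k=\lfloor kb/a\rfloor$ ($1\le k\le a-1$), and define for $n\ge1$ \[I_n=\big(x^ky_1^{i_1}\cdots y_m^{i_m} : k,i_j\in\mathbb{Z}_{\ge0},\ kb'+(i_1+\cdots+i_m)a'\ge n\big)A,\quad J_n=Q^n+\sum_{k=1}^{a-1}x^kQ^{n-n_k},\] and $I_n=A$ for $n\le0$; let $\mathcal{I}=\{I_n\}_{n\in\mathbb{Z}}$ and $G(\mathcal{I})=\bigoplus_{n\ge0}I_n/I_{n+1}$. Then (a) $G(\mathcal{I})$ is reduced; (b) $\overline{I_n}=I_n$ for every $n\ge1$; (c) $\overline{J_n}=J_n$ for every $n\ge1$.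
   Context: $(\underline{y})=(y_1,\dots,y_m)$; $\overline{J}$ denotes integral closure; $Q^j=A$ for $j\le0$. *)

From mathcomp Require Import all_boot all_order all_algebra.
Set Implicit Arguments. Unset Strict Implicit. Unset Printing Implicit Defensive.
Import Order.TTheory GRing.Theory Num.Theory.
Local Open Scope ring_scope.

Section PS.
Variables (K : fieldType) (N : nat).

Definition mon := {ffun 'I_N -> nat}.
Definition ps := mon -> K.

Definition ps_zero : ps := fun _ => 0.
Definition ps_one : ps := fun e => (e == [ffun=> 0%N])%:R.
Definition ps_add (f h : ps) : ps := fun e => f e + h e.
Definition ps_opp (f : ps) : ps := fun e => - f e.
Definition ps_sub (f h : ps) : ps := ps_add f (ps_opp h).
(* Cauchy product: coefficient at e is sum over e1 <= e of f(e1) h(e - e1);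
   every e1 <= e is encoded exactly once by v with values < (max e) + 1. *)
Definition ps_mul (f h : ps) : ps := fun e =>
  \sum_(v : {ffun 'I_N -> 'I_(\max_(i < N) e i).+1} | [forall i, (v i <= e i)%N])
     f [ffun i => nat_of_ord (v i)] * h [ffun i => (e i - v i)%N].
Definition ps_exp (f : ps) (k : nat) : ps := iter k (ps_mul f) ps_one.
Definition ps_sum (s : seq ps) : ps := foldr ps_add ps_zero s.
Definition ps_mon (e : mon) : ps := fun e' => (e' == e)%:R.
Definition ps_var (i : 'I_N) : ps := ps_mon [ffun j => (j == i : nat)].

Inductive ideal_gen (G : ps -> Prop) : ps -> Prop :=
| ig_zero : ideal_gen G ps_zero
| ig_step s g r : G g -> ideal_gen G r -> ideal_gen G (ps_add (ps_mul s g) r).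

Definition ideal_add (I J : ps -> Prop) : ps -> Prop :=
  ideal_gen (fun r => I r \/ J r).
Definition ideal_mul (I J : ps -> Prop) : ps -> Prop :=
  ideal_gen (fun r => exists u v, I u /\ J v /\ r = ps_mul u v).
Fixpoint ideal_pow (I : ps -> Prop) (n : nat) : ps -> Prop :=
  match n with
  | 0%N => fun _ => True
  | n'.+1 => ideal_mul (ideal_pow I n') I
  end.

(* Working in a quotient A = S/F: an ideal of A is represented by its
   preimage in S (an ideal of S containing F). *)
Variable F : ps -> Prop.
Definition qpow (I : ps -> Prop) (n : nat) : ps -> Prop :=
  ideal_add (ideal_pow I n) F.
(* preimage of the integral closure in A of the ideal I A :
   r^k + c_1 r^(k-1) + ... + c_k = 0 in A with c_i in (IA)^i *)
Definition qclosure (I : ps -> Prop) : ps -> Prop := fun r =>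
  exists (k : nat) (c : nat -> ps), (1 <= k)%N /\
    (forall i, (1 <= i <= k)%N -> qpow I i (c i)) /\
    F (ps_add (ps_exp r k)
              (ps_sum [seq ps_mul (c i) (ps_exp r (k - i)) | i <- iota 1 k])).

(* G(I) = (+)_{n>=0} I_n/I_{n+1}, for a filtration given by preimages In n.
   An element is represented by a family r with r n in In n and
   r n in In (n+1) for n large; components are classes mod In (n+1). *)
Definition gr_mul (r s : nat -> ps) : nat -> ps := fun n =>
  ps_sum [seq ps_mul (r i) (s (n - i)%N) | i <- iota 0 n.+1].
Definition gr_pow (r : nat -> ps) (k : nat) : nat -> ps :=
  iter k.-1 (gr_mul r) r.
Definition gr_reduced (In : nat -> ps -> Prop) : Prop :=
  forall r : nat -> ps,
    (forall n, In n (r n)) ->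
    (exists D, forall n, (D < n)%N -> In n.+1 (r n)) ->
    forall k, (1 <= k)%N ->
      (forall n, In n.+1 (gr_pow r k n)) ->  (* r^k = 0 in G(I) *)
      forall n, In n.+1 (r n).               (* r = 0 in G(I) *)
End PS.

Section Data.
Variables (K : fieldType) (m a b : nat) (g : ps K m.+1).

Definition xv : ps K m.+1 := @ps_var K m.+1 ord0.
Definition yv (i : 'I_m) : ps K m.+1 := @ps_var K m.+1 (lift ord0 i).
Definition Yid : ps K m.+1 -> Prop := ideal_gen (fun r => exists i, r = yv i).
Definition fA : ps K m.+1 := ps_sub (ps_exp xv a) g.
Definition Fid : ps K m.+1 -> Prop := ideal_gen (fun r => r = fA).

Definition dd := gcdn a b.
Definition a' := (a %/ dd)%N.
Definition b' := (b %/ dd)%N.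
Definition nk (k : nat) := (k * b %/ a)%N.

(* preimage in S of I_n ; for n = 0 this is all of A *)
Definition In (n : nat) : ps K m.+1 -> Prop :=
  ideal_gen (fun r => Fid r \/ exists e : mon m.+1,
     (n <= e ord0 * b' + (\sum_(i < m) e (lift ord0 i)) * a')%N /\ r = @ps_mon K m.+1 e).
Definition Qp (j : nat) : ps K m.+1 -> Prop := qpow Fid Yid j.
(* preimage in S of J_n = Q^n + sum_{k=1}^{a-1} x^k Q^{n - n_k}
   (n - n_k truncated at 0, matching Q^j = A for j <= 0) *)
Definition Jn (n : nat) : ps K m.+1 -> Prop :=
  ideal_gen (fun r => Fid r \/ Qp n r \/
    exists k q, (1 <= k <= a - 1)%N /\ Qp (n - nk k) q /\
                r = ps_mul (ps_exp xv k) q).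
End Data.

(* Give [x] the weight [b'] and each [y_i] the weight [a']. Then [I_n] is
   [F_n + (f)], where [F_n] consists of the series all of whose monomials have
   weight at least [n], and the initial form of [f = x^a - g] is [x^a - g*],
   where [g*], the part of [g] of weight [a b'], is nonzero because [g] is not
   in [Q^(b+1)]. As [a] is invertible, [x^a - g*] is a separable polynomial in
   [x] over the fraction field of [K[y]], hence squarefree: if some power of
   the initial form of [r] in [F_n] is divisible by [x^a - g*], so is that
   initial form, and [r] lies in [I_(n+1)]. This is (a). A filtration with a
   reduced associated graded ring consists of integrally closed ideals, which
   gives (b), and (c) follows from [J_n = I_(n a')]. *)

From HB Require Import structures.
From mathcomp Require Import all_boot all_algebra all_field.
From mathcomp Require Import boolp zify ring.
From mathcomp.multinomials Require Import mpoly.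
Set Implicit Arguments. Unset Strict Implicit. Unset Printing Implicit Defensive.
Import GRing.Theory.
Local Open Scope ring_scope.

(** * The power series ring *)

Section Monomials.
Variable N : nat.
Local Notation mon := (mon N).

Definition madd (u v : mon) : mon := [ffun i => (u i + v i)%N].
Definition msub (u v : mon) : mon := [ffun i => (u i - v i)%N].
Definition mle (u v : mon) : bool := [forall i, (u i <= v i)%N].
Definition mzero : mon := [ffun=> 0%N].

(* Unlike [apply/ffunP], this exposes the entries [u i] in the same form as
   [ffunE] produces them, so that [lia] identifies the two. *)
Lemma mon_ext (u v : mon) : (forall i, u i = v i) -> u = v.
Proof. by move=> uv; apply/ffunP. Qed.

Lemma mleP (u v : mon) : reflect (forall i, (u i <= v i)%N) (mle u v).
Proof. exact: forallP. Qed.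

Lemma mle_trans (u v w : mon) : mle u v -> mle v w -> mle u w.
Proof. by move=> /mleP uv /mleP vw; apply/mleP=> i; apply: leq_trans (uv i) (vw i). Qed.

Lemma mle_msub (e u : mon) : mle (msub e u) e.
Proof. by apply/mleP=> i; rewrite ffunE leq_subr. Qed.

Lemma msubK (e u : mon) : mle u e -> msub e (msub e u) = u.
Proof. by move/mleP=> ue; apply: mon_ext=> i; rewrite !ffunE; have := ue i; lia. Qed.

Lemma msub_maddl (u v : mon) : msub (madd u v) u = v.
Proof. by apply: mon_ext=> i; rewrite !ffunE; lia. Qed.

Lemma madd_msub (u e : mon) : mle u e -> madd u (msub e u) = e.
Proof. by move/mleP=> ue; apply: mon_ext=> i; rewrite !ffunE; have := ue i; lia. Qed.

Definition bounded_mon B (v : {ffun 'I_N -> 'I_B}) : mon := [ffun i => val (v i)].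

Lemma bounded_mon_inj B : injective (@bounded_mon B).
Proof.
move=> v w /ffunP vw; apply/ffunP=> i; apply: val_inj.
by have := vw i; rewrite !ffunE.
Qed.

Lemma bounded_monP B (e : mon) :
  (forall i, e i < B)%N -> exists v, @bounded_mon B v = e.
Proof.
move=> eB; exists [ffun i => Ordinal (eB i)].
by apply/ffunP=> i; rewrite !ffunE.
Qed.

Definition mdivisors (e : mon) : seq mon :=
  image (@bounded_mon (\max_(i < N) e i).+1)
    [pred v : {ffun 'I_N -> 'I_(\max_(i < N) e i).+1} | [forall i, (v i <= e i)%N]].

Lemma mdivisors_uniq (e : mon) : uniq (mdivisors e).
Proof. by rewrite map_inj_uniq ?enum_uniq //; apply: bounded_mon_inj. Qed.

Lemma mem_mdivisors (e u : mon) : (u \in mdivisors e) = mle u e.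
Proof.
apply/idP/mleP => [|ue].
  by case/imageP=> v; rewrite inE=> /forallP ve -> i; rewrite /bounded_mon ffunE; apply: ve.
have [|v vu] := @bounded_monP (\max_(i < N) e i).+1 u.
  by move=> i; rewrite ltnS (leq_trans (ue i)) // (leq_bigmax (F := e)).
rewrite -vu; apply: map_f; rewrite mem_enum inE; apply/forallP=> i.
by have := ue i; rewrite -vu ffunE.
Qed.

End Monomials.

Arguments mzero {N}.

Section PowerSeriesRing.
Variables (K : fieldType) (N : nat).
Local Notation mon := (mon N).
Local Notation ps := (ps K N).

Lemma ps_mul_mdivisors (f h : ps) e :
  ps_mul f h e = \sum_(u <- mdivisors e) f u * h (msub e u).
Proof.
rewrite /mdivisors big_image /ps_mul; apply: eq_bigr=> v _.
by congr (_ * h _); apply/ffunP=> i; rewrite !ffunE.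
Qed.

Lemma ps_mul_enum (f h : ps) e (t : seq mon) :
  uniq t -> (forall u, (u \in t) = mle u e) ->
  ps_mul f h e = \sum_(u <- t) f u * h (msub e u).
Proof.
move=> t_uniq mem_t; rewrite ps_mul_mdivisors; apply: perm_big.
by apply: uniq_perm; rewrite ?mdivisors_uniq // => u; rewrite mem_mdivisors mem_t.
Qed.

Lemma ps_mulC : commutative (@ps_mul K N).
Proof.
move=> f h; apply: funext=> e; rewrite ps_mul_mdivisors.
rewrite (ps_mul_enum _ _ (t := map (msub e) (mdivisors e))).
- rewrite [RHS]big_map; apply: eq_big_seq=> u; rewrite mem_mdivisors=> ue.
  by rewrite msubK // mulrC.
- rewrite map_inj_in_uniq ?mdivisors_uniq // => u v; rewrite !mem_mdivisors=> ue ve uv.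
  by rewrite -(msubK ue) uv msubK.
move=> u; apply/mapP/idP=> [[v _ ->]|ue]; first exact: mle_msub.
by exists (msub e u); rewrite ?mem_mdivisors ?mle_msub ?msubK.
Qed.

Lemma ps_mulDl : left_distributive (@ps_mul K N) (@ps_add K N).
Proof.
move=> f g h; apply: funext=> e; rewrite /ps_add !ps_mul_mdivisors -big_split /=.
by apply: eq_bigr=> u _; rewrite mulrDl.
Qed.

Lemma ps_mul1 : left_id (@ps_one K N) (@ps_mul K N).
Proof.
move=> h; apply: funext=> e; rewrite ps_mul_mdivisors (bigD1_seq mzero) ?mdivisors_uniq //=.
  rewrite /ps_one eqxx mul1r big1_seq ?addr0.
    by congr h; apply: mon_ext=> i; rewrite !ffunE subn0.
  by move=> u /andP[u0 _]; rewrite (negbTE u0) mul0r.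
by rewrite mem_mdivisors; apply/mleP=> i; rewrite ffunE.
Qed.

(* Both sides are the sum of [f u * g (v - u) * h (e - v)] over [u <= v <= e]. *)
Lemma ps_mulA : associative (@ps_mul K N).
Proof.
move=> f g h; apply: funext=> e; rewrite !ps_mul_mdivisors.
pose F u v := if mle u v then f u * (g (msub v u) * h (msub e v)) else 0.
have E1 u : u \in mdivisors e ->
    f u * ps_mul g h (msub e u) = \sum_(v <- mdivisors e) F u v.
  rewrite mem_mdivisors=> /mleP ue.
  rewrite (ps_mul_enum _ _ (t := map (fun v => msub v u) [seq v <- mdivisors e | mle u v])).
  - rewrite mulr_sumr (big_map (fun v => msub v u)) big_filter [LHS]big_mkcond.
    apply: eq_big_seq=> v.
    rewrite mem_mdivisors /F=> /mleP ve; case: ifP=> // /mleP uv.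
    congr (_ * (_ * h _)); apply: mon_ext=> i; rewrite !ffunE.
    by have := ue i; have := ve i; have := uv i; lia.
  - rewrite map_inj_in_uniq ?filter_uniq ?mdivisors_uniq // => v w.
    rewrite !mem_filter=> /andP[/mleP uv _] /andP[/mleP uw _] /ffunP vw.
    apply: mon_ext=> i; have := vw i; rewrite !ffunE.
    by have := uv i; have := uw i; lia.
  move=> w; apply/mapP/idP=> [[v]|/mleP we].
    rewrite mem_filter mem_mdivisors=> /andP[/mleP uv /mleP ve] ->.
    by apply/mleP=> i; rewrite !ffunE; have := uv i; have := ve i; lia.
  exists (madd u w); last by rewrite msub_maddl.
  rewrite mem_filter mem_mdivisors; apply/andP; split; apply/mleP=> i; rewrite !ffunE.
    exact: leq_addr.
  by have := ue i; have := we i; rewrite ffunE; lia.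
have E2 v : v \in mdivisors e ->
    ps_mul f g v * h (msub e v) = \sum_(u <- mdivisors e) F u v.
  rewrite mem_mdivisors=> ve.
  rewrite (ps_mul_enum _ _ (t := [seq u <- mdivisors e | mle u v])).
  - rewrite big_filter big_mkcond mulr_suml; apply: eq_bigr=> u _.
    by rewrite /F; case: ifP; rewrite ?mul0r ?mulrA.
  - by rewrite filter_uniq ?mdivisors_uniq.
  move=> u; rewrite mem_filter mem_mdivisors andb_idr //.
  by move=> uv; apply: mle_trans uv ve.
rewrite (eq_big_seq _ E1) (eq_big_seq _ E2); exact: exchange_big.
Qed.

Lemma ps_one_neq0 : @ps_one K N != @ps_zero K N.
Proof.
apply/eqP=> /(congr1 (fun f : ps => f mzero)).
by rewrite /ps_one eqxx => /eqP; rewrite oner_eq0.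
Qed.

Lemma ps_addA : associative (@ps_add K N).
Proof. by move=> f g h; apply: funext=> e; rewrite /ps_add addrA. Qed.

Lemma ps_addC : commutative (@ps_add K N).
Proof. by move=> f g; apply: funext=> e; rewrite /ps_add addrC. Qed.

Lemma ps_add0 : left_id (@ps_zero K N) (@ps_add K N).
Proof. by move=> f; apply: funext=> e; rewrite /ps_add /ps_zero add0r. Qed.

Lemma ps_addN : left_inverse (@ps_zero K N) (@ps_opp K N) (@ps_add K N).
Proof. by move=> f; apply: funext=> e; rewrite /ps_add /ps_opp /ps_zero addNr. Qed.

End PowerSeriesRing.

HB.instance Definition _ (K : fieldType) (N : nat) := gen_eqMixin (ps K N).
HB.instance Definition _ (K : fieldType) (N : nat) := gen_choiceMixin (ps K N).
HB.instance Definition _ (K : fieldType) (N : nat) :=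
  GRing.isZmodule.Build (ps K N) (@ps_addA K N) (@ps_addC K N) (@ps_add0 K N)
    (@ps_addN K N).
HB.instance Definition _ (K : fieldType) (N : nat) :=
  GRing.Zmodule_isComNzRing.Build (ps K N) (@ps_mulA K N) (@ps_mulC K N)
    (@ps_mul1 K N) (@ps_mulDl K N) (@ps_one_neq0 K N).

Section PowerSeriesCalculus.
Variables (K : fieldType) (N : nat).
Local Notation mon := (mon N).
Local Notation ps := (ps K N).
Local Notation pmon := (@ps_mon K N).

Lemma ps_addE (f h : ps) : ps_add f h = f + h. Proof. by []. Qed.
Lemma ps_mulE (f h : ps) : ps_mul f h = f * h. Proof. by []. Qed.
Lemma ps_oneE : @ps_one K N = 1. Proof. by []. Qed.
Lemma ps_subE (f h : ps) : ps_sub f h = f - h. Proof. by []. Qed.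

Lemma ps_expE (f : ps) k : ps_exp f k = f ^+ k.
Proof. by elim: k=> //= k IH; rewrite /ps_exp /= -/(ps_exp f k) IH exprS. Qed.

Lemma ps_sumE (s : seq ps) : ps_sum s = \sum_(x <- s) x.
Proof. by elim: s=> [|x s IH]; rewrite ?big_nil ?big_cons //= -IH. Qed.

Lemma coefpsD (f h : ps) e : (f + h) e = f e + h e. Proof. by []. Qed.
Lemma coefpsN (f : ps) e : (- f) e = - f e. Proof. by []. Qed.
Lemma coefps0 e : (0 : ps) e = 0. Proof. by []. Qed.

Lemma coefpsM (f h : ps) e : (f * h) e = \sum_(u <- mdivisors e) f u * h (msub e u).
Proof. exact: ps_mul_mdivisors. Qed.

Lemma coefps_sum I (r : seq I) (P : pred I) (F : I -> ps) e :
  (\sum_(i <- r | P i) F i) e = \sum_(i <- r | P i) F i e.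
Proof.
by elim: r=> [|x r IH]; rewrite ?big_nil ?big_cons //; case: (P x); rewrite ?coefpsD IH.
Qed.

Lemma ps_monE (u e : mon) : pmon u e = (e == u)%:R. Proof. by []. Qed.

Lemma coefps_monM (u : mon) (t : ps) e :
  (pmon u * t) e = if mle u e then t (msub e u) else 0.
Proof.
rewrite coefpsM; case: ifP=> ue.
  rewrite (bigD1_seq u) ?mem_mdivisors ?mdivisors_uniq //= ps_monE eqxx mul1r.
  by rewrite big1_seq ?addr0 // => v /andP[vu _]; rewrite ps_monE (negbTE vu) mul0r.
apply: big1_seq=> v; rewrite ps_monE mem_mdivisors; case: eqP=> [->|_]; last by rewrite mul0r.
by rewrite ue.
Qed.

Lemma ps_monM (u v : mon) : pmon u * pmon v = pmon (madd u v).
Proof.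
apply: funext=> e; rewrite coefps_monM !ps_monE; case: ifP=> [ue|/mleP ue].
  suff -> : (msub e u == v) = (e == madd u v) by [].
  by apply/eqP/eqP=> [<-|->]; rewrite ?madd_msub ?msub_maddl.
case: eqP=> // euv; case: ue=> i; rewrite euv ffunE; exact: leq_addr.
Qed.

Lemma ps_mon0 : pmon mzero = 1. Proof. by []. Qed.

Definition wdeg (c : 'I_N -> nat) (e : mon) : nat := (\sum_(i < N) c i * e i)%N.

Lemma wdegD c u v : wdeg c (madd u v) = (wdeg c u + wdeg c v)%N.
Proof. by rewrite /wdeg -big_split /=; apply: eq_bigr=> i _; rewrite ffunE mulnDr. Qed.

Lemma wdegB c e u : mle u e -> wdeg c (msub e u) = (wdeg c e - wdeg c u)%N.
Proof. by move=> ue; rewrite -{2}(madd_msub ue) wdegD addKn. Qed.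

Lemma leq_wdeg c u e : mle u e -> (wdeg c u <= wdeg c e)%N.
Proof. by move/mleP=> ue; apply: leq_sum=> i _; rewrite leq_mul2l ue orbT. Qed.

Definition wfilt c n (s : ps) := forall e, s e != 0 -> (n <= wdeg c e)%N.

Lemma wfilt0 c n : wfilt c n 0.
Proof. by move=> e; rewrite coefps0 eqxx. Qed.

Lemma wfiltD c n s t : wfilt c n s -> wfilt c n t -> wfilt c n (s + t).
Proof.
move=> sn tn e; rewrite coefpsD; have [->|/sn //] := eqVneq (s e) 0.
by rewrite add0r; apply: tn.
Qed.

Lemma wfiltN c n s : wfilt c n s -> wfilt c n (- s).
Proof. by move=> sn e; rewrite coefpsN oppr_eq0; apply: sn. Qed.

Lemma wfiltB c n s t : wfilt c n s -> wfilt c n t -> wfilt c n (s - t).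
Proof. by move=> sn tn; apply: wfiltD=> //; apply: wfiltN. Qed.

Lemma wfiltW c n n' s : (n' <= n)%N -> wfilt c n s -> wfilt c n' s.
Proof. by move=> n'n sn e /sn; apply: leq_trans. Qed.

Lemma wfilt_mon c u : wfilt c (wdeg c u) (pmon u).
Proof. by move=> e; rewrite ps_monE; case: (eqVneq e u)=> [->|]; rewrite ?eqxx. Qed.

Lemma wfiltM c n n' s t : wfilt c n s -> wfilt c n' t -> wfilt c (n + n')%N (s * t).
Proof.
move=> sn tn' e; apply: contraR; rewrite -ltnNge=> e_lt.
rewrite coefpsM big1_seq // => u; rewrite mem_mdivisors=> ue.
have [->|/sn su] := eqVneq (s u) 0; first by rewrite mul0r.
have [->|/tn' tu] := eqVneq (t (msub e u)) 0; first by rewrite mulr0.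
by move: tu; rewrite wdegB //; have := leq_wdeg c ue; lia.
Qed.

Lemma wfiltMl c n s t : wfilt c n t -> wfilt c n (s * t).
Proof. by move=> tn; rewrite -(add0n n); apply: wfiltM=> // e. Qed.

Lemma wfiltX c n t k : wfilt c n t -> wfilt c (n * k)%N (t ^+ k).
Proof.
move=> tn; elim: k=> [|k IH]; first by rewrite muln0=> e.
by rewrite exprS mulnS; apply: wfiltM.
Qed.

Definition wcomp c w (s : ps) : ps := fun e => if wdeg c e == w then s e else 0.

Lemma wcomp0 c w : wcomp c w 0 = 0.
Proof. by apply: funext=> e; rewrite /wcomp; case: ifP. Qed.

Lemma wcompB c w s t : wcomp c w (s - t) = wcomp c w s - wcomp c w t.
Proof. by apply: funext=> e; rewrite /wcomp !coefpsD !coefpsN; case: ifP; rewrite ?subr0. Qed.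

Lemma wcomp_id c w s : wcomp c w (wcomp c w s) = wcomp c w s.
Proof. by apply: funext=> e; rewrite /wcomp; case: ifP=> // ->. Qed.

Lemma wcomp_eq0 c w s : wfilt c w.+1 s -> wcomp c w s = 0.
Proof.
move=> sw; apply: funext=> e; rewrite /wcomp; case: eqP=> // ew.
by apply/eqP; apply: contraT=> /sw; rewrite ew ltnn.
Qed.

Lemma wfilt_wcomp c w s : wfilt c w (wcomp c w s).
Proof. by move=> e; rewrite /wcomp; case: (eqVneq (wdeg c e) w)=> [->|]; rewrite ?eqxx. Qed.

Lemma wfilt_sub_wcomp c w s : wfilt c w s -> wfilt c w.+1 (s - wcomp c w s).
Proof.
move=> sw e; rewrite coefpsD coefpsN /wcomp; case: (eqVneq (wdeg c e) w)=> [_|ew].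
  by rewrite subrr eqxx.
by rewrite subr0=> /sw; rewrite leq_eqVlt eq_sym (negbTE ew).
Qed.

Lemma wcomp_mon c w u : wcomp c w (pmon u) = if wdeg c u == w then pmon u else 0.
Proof.
apply: funext=> e; rewrite /wcomp ps_monE; case: (eqVneq e u)=> [->|eu].
  by case: ifP; rewrite ?ps_monE ?eqxx.
by case: ifP; case: ifP; rewrite ?ps_monE ?(negbTE eu).
Qed.

Lemma wcompM c n n' s t : wfilt c n s -> wfilt c n' t ->
  wcomp c (n + n')%N (s * t) = wcomp c n s * wcomp c n' t.
Proof.
move=> sn tn'; apply: funext=> e; rewrite coefpsM /wcomp coefpsM.
case: eqP=> [en|en].
  apply: eq_big_seq=> u; rewrite mem_mdivisors=> ue; rewrite wdegB //.
  have [->|/sn su] := eqVneq (s u) 0; first by rewrite mul0r; case: ifP; rewrite ?mul0r.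
  have [->|/[dup] tu /tn'] := eqVneq (t (msub e u)) 0.
    by rewrite !mulr0; case: ifP; case: ifP; rewrite ?mulr0.
  rewrite wdegB // => tu'; have uwe := leq_wdeg c ue.
  have -> : wdeg c u == n by apply/eqP; lia.
  by have -> : (wdeg c e - wdeg c u == n')%N by apply/eqP; lia.
rewrite big1_seq // => u; rewrite mem_mdivisors=> ue; rewrite wdegB //.
have uwe := leq_wdeg c ue; case: eqP=> uw; last by rewrite mul0r.
by case: eqP=> euw; [case: en; lia | rewrite mulr0].
Qed.

Lemma wcompX c n t k : wfilt c n t -> wcomp c (n * k)%N (t ^+ k) = wcomp c n t ^+ k.
Proof.
move=> tn; elim: k=> [|k IH].
  rewrite muln0 !expr0; apply: funext=> e; rewrite /wcomp; case: eqP=> // e0.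
  rewrite -ps_oneE /ps_one; case: eqP=> // ez; case: e0; rewrite ez /wdeg.
  by rewrite big1 // => i _; rewrite ffunE muln0.
by rewrite exprS mulnS wcompM ?IH ?exprS //; apply: wfiltX.
Qed.

End PowerSeriesCalculus.

(** * Ideals *)

Section Ideals.
Variables (K : fieldType) (N : nat).
Local Notation mon := (mon N).
Local Notation ps := (ps K N).
Local Notation pmon := (@ps_mon K N).

Definition is_ideal (P : ps -> Prop) :=
  [/\ P 0, forall x y, P x -> P y -> P (x + y) & forall s x, P x -> P (s * x)].

Section IdealTheory.
Variable P : ps -> Prop.
Hypothesis idP : is_ideal P.

Lemma idl0 : P 0. Proof. by case: idP. Qed.
Lemma idlD x y : P x -> P y -> P (x + y). Proof. by case: idP=> _ + _; apply. Qed.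
Lemma idlM s x : P x -> P (s * x). Proof. by case: idP=> _ _; apply. Qed.
Lemma idlMr s x : P x -> P (x * s). Proof. by rewrite mulrC; apply: idlM. Qed.
Lemma idlN x : P x -> P (- x). Proof. by rewrite -mulN1r; apply: idlM. Qed.

Lemma idl_sum I (r : seq I) (Q : pred I) (F : I -> ps) :
  (forall i, Q i -> P (F i)) -> P (\sum_(i <- r | Q i) F i).
Proof.
move=> PF; elim: r=> [|i r IH]; rewrite ?big_nil ?big_cons; first exact: idl0.
by case: ifP=> // Qi; apply: idlD=> //; apply: PF.
Qed.

Lemma idl_sum_seq (I : eqType) (r : seq I) (F : I -> ps) :
  (forall i, i \in r -> P (F i)) -> P (\sum_(i <- r) F i).
Proof. by move=> PF; rewrite big_seq; apply: idl_sum. Qed.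

Lemma idl_congr x y : P x -> P (y - x) -> P y.
Proof. by move=> Px Pyx; rewrite -(subrK x y); apply: idlD. Qed.

End IdealTheory.

Lemma ideal_gen_is_ideal (G : ps -> Prop) : is_ideal (ideal_gen G).
Proof.
split; first exact: ig_zero.
  move=> x y; elim=> [|s g r Gg _ IH] Gy; first by rewrite add0r.
  by rewrite !ps_addE -addrA; apply: ig_step=> //; apply: IH.
move=> s x; elim=> [|t g r Gg _ IH]; first by rewrite mulr0; apply: ig_zero.
by rewrite !ps_addE !ps_mulE mulrDr mulrA; apply: ig_step.
Qed.

Lemma ideal_gen_in (G : ps -> Prop) x : G x -> ideal_gen G x.
Proof.
move=> Gx; rewrite -[x]addr0 -[x]mul1r; apply: ig_step=> //; exact: ig_zero.
Qed.

Lemma ideal_gen_min (G P : ps -> Prop) : is_ideal P -> (forall x, G x -> P x) ->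
  forall x, ideal_gen G x -> P x.
Proof.
move=> idP GP x; elim=> [|s g r Gg _ IH]; first exact: idl0.
by apply: idlD=> //; apply: idlM=> //; apply: GP.
Qed.

Lemma ideal_pow_is_ideal (I : ps -> Prop) n : is_ideal (ideal_pow I n).
Proof. by case: n=> [|n] //=; exact: ideal_gen_is_ideal. Qed.

Lemma ideal_powM (I : ps -> Prop) p q x y :
  ideal_pow I p x -> ideal_pow I q y -> ideal_pow I (p + q)%N (x * y).
Proof.
elim: q y=> [|q IH] y Ix Iy.
  by rewrite addn0; apply: idlMr=> //; apply: ideal_pow_is_ideal.
rewrite addnS /=; move: y Iy; apply: ideal_gen_min.
  split; first by rewrite mulr0; apply: ig_zero.
    by move=> u v Iu Iv; rewrite mulrDr; apply: idlD=> //; apply: ideal_gen_is_ideal.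
  by move=> s u Iu; rewrite mulrCA; apply: idlM=> //; apply: ideal_gen_is_ideal.
move=> z [u [v [Iu [Iv ->]]]]; apply: ideal_gen_in; exists (x * u), v.
by rewrite ps_mulE mulrA; split=> //; apply: IH.
Qed.

Lemma ideal_pow_le (I : ps -> Prop) p q x :
  (q <= p)%N -> ideal_pow I p x -> ideal_pow I q x.
Proof.
move=> qp; rewrite -(subnK qp); elim: (p - q)%N x=> [|k IH] x //= Ix.
apply: IH; move: x Ix; apply: ideal_gen_min; first exact: ideal_pow_is_ideal.
move=> z [u [v [Iu [_ ->]]]]; rewrite ps_mulE mulrC.
by apply: idlM=> //; apply: ideal_pow_is_ideal.
Qed.

Lemma ideal_pow_filt (I : ps -> Prop) (Fl : nat -> ps -> Prop) n :
  (forall k, is_ideal (Fl k)) -> (forall x, Fl 0%N x) ->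
  (forall k l x y, Fl k x -> Fl l y -> Fl (k + l)%N (x * y)) ->
  (forall x, I x -> Fl n x) ->
  forall i x, ideal_pow I i x -> Fl (n * i)%N x.
Proof.
move=> Fl_ideal Fl0 FlM IFl; elim=> [|i IH] x /=; first by rewrite muln0.
apply: ideal_gen_min=> // z [u [v [Iu [Iv ->]]]].
by rewrite mulnS addnC; apply: FlM; [apply: IH | apply: IFl].
Qed.

Lemma wfilt_is_ideal c n : is_ideal (wfilt c n).
Proof. by split; [exact: wfilt0 | exact: wfiltD | move=> s x; exact: wfiltMl]. Qed.

Definition mtrunc B (e : mon) : mon := [ffun i => minn (e i) B].

Lemma wdeg_mtrunc c n e : (n <= wdeg c e)%N -> (n <= wdeg c (mtrunc n e))%N.
Proof.
move=> ne; have [/existsP[i /andP[ci ni]]|] := boolP [exists i, (0 < c i) && (n <= e i)]%N.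
  rewrite /wdeg (bigD1 i) //= ffunE (minn_idPr ni).
  by apply: leq_trans (leq_addr _ _); rewrite -{1}[n]mul1n leq_mul2r ci orbT.
rewrite negb_exists=> /forallP small; rewrite (_ : wdeg c _ = wdeg c e) //.
apply: eq_bigr=> i _; rewrite ffunE; have := small i.
rewrite negb_and -leqNgt -ltnNge leqn0=> /orP[/eqP-> | /ltnW/minn_idPl-> //].
by rewrite !mul0n.
Qed.

(* Every monomial of [s] is divisible by its truncation at [B], and there are
   only finitely many truncated monomials, so [s] is a finite combination of
   [ok] monomials. *)
Lemma ideal_mon_support (P : ps -> Prop) (ok : pred mon) B :
  is_ideal P -> (forall e, ok e -> ok (mtrunc B e)) ->
  (forall u, ok u -> P (pmon u)) ->
  forall s : ps, (forall e, s e != 0 -> ok e) -> P s.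
Proof.
move=> idP ok_trunc P_mon.
suff divisible L : all ok L -> forall s : ps,
    (forall e, s e != 0 -> has (fun u => mle u e) L) -> P s.
  move=> s s_ok; apply: (divisible [seq u <- codom (@bounded_mon N B.+1) | ok u]).
    exact: filter_all.
  move=> e /s_ok oke; apply/hasP; exists (mtrunc B e); last first.
    by apply/mleP=> i; rewrite ffunE geq_minl.
  rewrite mem_filter ok_trunc //=.
  have [|v <-] := @bounded_monP N B.+1 (mtrunc B e); last exact: codom_f.
  by move=> i; rewrite ffunE ltnS geq_minr.
elim: L=> [_ s s0|u L IH /andP[oku okL] s s_div].
  have -> : s = 0 by apply: funext=> e; apply/eqP; apply: contraT=> /s0.
  exact: idl0.
pose s1 : ps := fun e => s (madd u e).
pose s2 : ps := fun e => if mle u e then 0 else s e.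
have -> : s = pmon u * s1 + s2.
  apply: funext=> e; rewrite coefpsD coefps_monM /s1 /s2.
  by case: ifP=> ue; rewrite ?add0r ?addr0 ?madd_msub.
apply: idlD=> //; first by apply: (idlMr idP); apply: P_mon.
apply: IH=> // e; rewrite /s2; case: ifP=> [_|ue]; first by rewrite eqxx.
by move/s_div; rewrite /= ue.
Qed.

End Ideals.

(** * Polynomials in [x] over [K[y]] *)

Section Separable.
Variable L : fieldType.

Lemma separable_dvdp_exp (P R : {poly L}) k :
  separable_poly P -> P %| R ^+ k -> P %| R.
Proof.
move=> sepP PRk; set G := gcdp P R; set Q := P %/ G.
have QG : Q * G = P by rewrite /Q divpK ?dvdp_gcdl.
have coQG : coprimep Q G by apply: (separable_coprime sepP); rewrite QG.
have coQR : coprimep Q R.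
  apply/coprimepP=> d dQ dR; move/coprimepP: coQG; apply=> //.
  by rewrite dvdp_gcd dR andbT (dvdp_trans dQ) // -QG dvdp_mulr.
have Q1 : Q %= 1.
  move/coprimepP: (coprimep_expr k coQR); apply=> //.
  by apply: dvdp_trans PRk; rewrite -QG dvdp_mulr.
have PG : P %= G by rewrite -QG mulrC; have := eqp_mull G Q1; rewrite mulr1.
by rewrite (eqp_dvdl _ PG) dvdp_gcdr.
Qed.

Lemma separable_XnsubC (a : nat) (c : L) :
  (0 < a)%N -> (a%:R : L) != 0 -> c != 0 -> separable_poly ('X^a - c%:P).
Proof.
case: a=> // a _ a0 c0; rewrite unlock.
pose u := (c^-1)%:P; pose w := ((a.+1%:R : L)^-1)%:P; pose A := (a.+1%:R : {poly L}).
have uc : u * c%:P = 1 by rewrite -polyCM mulVf.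
have wA : w * A = 1 by rewrite /A -polyC_natr -polyCM mulVf.
apply/Bezout_eq1_coprimepP; exists (- u, u * w * 'X).
rewrite /= derivB derivC subr0 derivXn /= exprS -mulr_natr -/A.
have -> : - u * ('X * 'X^a - c%:P) + u * w * 'X * ('X^a * A) =
   u * c%:P + u * 'X * 'X^a * (w * A - 1) by ring.
by rewrite uc wA subrr mulr0 addr0.
Qed.

End Separable.

(* In the fraction field, ['X^a - G] is separable, hence squarefree. *)
Lemma XnsubC_dvd_exp (R : idomainType) (a k : nat) (G : R) (rho H : {poly R}) :
  (0 < a)%N -> (a%:R : R) != 0 -> G != 0 ->
  rho ^+ k = H * ('X^a - G%:P) -> exists Q, rho = Q * ('X^a - G%:P).
Proof.
move=> a_gt0 aR G0 rhoH; set P := 'X^a - G%:P.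
have monP : P \is monic by apply: monicXnsubC.
pose Q0 := rho %/ P; pose R0 := rho %% P.
have rhoE : rho = Q0 * P + R0 by apply: Pdiv.IdomainMonic.divp_eq.
exists Q0; suff R0_eq0 : R0 = 0 by rewrite {1}rhoE R0_eq0 addr0.
have R0k : R0 ^+ k = (H - Q0 * \sum_(i < k) R0 ^+ (k.-1 - i) * rho ^+ i) * P.
  have R0rho : R0 - rho = - (Q0 * P) by rewrite {1}rhoE opprD addrCA subrr addr0.
  rewrite -(subrK (rho ^+ k) (R0 ^+ k)) subrXX R0rho rhoH.
  by rewrite mulrBl mulNr mulrAC addrC.
pose f := map_poly (@tofrac R).
have finj : injective (@tofrac R) by move=> x y /eqP; rewrite tofrac_eq=> /eqP.
have size_f q : size (f q) = size q by rewrite size_map_inj_poly ?tofrac0.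
have sep_fP : separable_poly (f P).
  rewrite /f rmorphB /= map_polyXn map_polyC; apply: separable_XnsubC=> //.
    by rewrite -tofrac1 -tofracMn tofrac_eq.
  by rewrite tofrac_eq0.
have fP_fR0 : f P %| f R0.
  by rewrite (separable_dvdp_exp (k := k)) // -rmorphXn R0k rmorphM dvdp_mulIr.
apply/eqP; apply: contraT=> R0_neq0.
have fR0_neq0 : f R0 != 0 by rewrite -size_poly_eq0 size_f size_poly_eq0.
have := dvdp_leq fR0_neq0 fP_fR0; rewrite !size_f leqNgt.
by rewrite ltn_modpN0 ?monic_neq0.
Qed.

Section PolyEmbedding.
Variables (K : fieldType) (m : nat).
Local Notation mon := (mon m.+1).
Local Notation ps := (ps K m.+1).
Local Notation Ky := {mpoly K[m]}.

Definition ypart (e : mon) : 'X_{1..m} := [multinom e (lift ord0 i) | i < m].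
Definition mkmon (j : nat) (al : 'X_{1..m}) : mon :=
  [ffun i => if unlift ord0 i is Some i' then al i' else j].

Lemma mkmon0 j al : mkmon j al ord0 = j.
Proof. by rewrite ffunE unlift_none. Qed.

Lemma ypart_mkmon j al : ypart (mkmon j al) = al.
Proof. by apply/mnmP=> i; rewrite mnmE ffunE liftK. Qed.

Lemma mkmon_eta (e : mon) : mkmon (e ord0) (ypart e) = e.
Proof. by apply/ffunP=> i; rewrite ffunE; case: unliftP=> [j ->|->]; rewrite ?mnmE. Qed.

Lemma madd_mkmon j al l be : madd (mkmon j al) (mkmon l be) = mkmon (j + l) (al + be)%MM.
Proof. by apply/ffunP=> i; rewrite !ffunE; case: unliftP=> [i' _|_]; rewrite ?mnmDE. Qed.

Lemma eq_mkmon (e : mon) j al : (e == mkmon j al) = (e ord0 == j) && (ypart e == al).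
Proof.
apply/eqP/andP=> [->|[/eqP <- /eqP <-]]; last by rewrite mkmon_eta.
by rewrite mkmon0 ypart_mkmon.
Qed.

(* A polynomial in [x] over [K[y]] read as a power series: the coefficient of
   [x^j y^al] is [(p`_j)@_al]. *)
Definition ps_of_poly (p : {poly Ky}) : ps := fun e => (p`_(e ord0))@_(ypart e).

Lemma ps_of_poly_is_zmod_morphism : zmod_morphism ps_of_poly.
Proof. by move=> p q; apply: funext=> e; rewrite /ps_of_poly coefB mcoeffB. Qed.

HB.instance Definition _ :=
  GRing.isZmodMorphism.Build {poly Ky} ps ps_of_poly ps_of_poly_is_zmod_morphism.

Lemma ps_of_poly_sum I (r : seq I) (P : pred I) (F : I -> {poly Ky}) :
  ps_of_poly (\sum_(i <- r | P i) F i) = \sum_(i <- r | P i) ps_of_poly (F i).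
Proof. exact: raddf_sum. Qed.

Definition ps_scale (c : K) (s : ps) : ps := fun e => c * s e.

Lemma ps_scaleM c c' (s t : ps) : ps_scale c s * ps_scale c' t = ps_scale (c * c') (s * t).
Proof.
apply: funext=> e; rewrite /ps_scale !coefpsM mulr_sumr.
by apply: eq_bigr=> u _; rewrite mulrACA.
Qed.

Definition pterm (c : K) (al : 'X_{1..m}) (j : nat) : {poly Ky} := (c *: 'X_[al])%:P * 'X^j.

Lemma ps_of_pterm c al j :
  ps_of_poly (pterm c al j) = ps_scale c (@ps_mon K m.+1 (mkmon j al)).
Proof.
apply: funext=> e; rewrite /ps_of_poly /ps_scale /pterm coefCM coefXn ps_monE eq_mkmon.
case: eqP=> _ /=; last by rewrite mulr0 mcoeff0 mulr0.
by rewrite mulr1 mcoeffZ mcoeffX eq_sym.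
Qed.

Lemma ptermM c al j c' be l :
  pterm c al j * pterm c' be l = pterm (c * c') (al + be)%MM (j + l).
Proof.
rewrite /pterm mulrACA -polyCM exprD; congr (_%:P * _).
by rewrite -scalerAl -scalerAr scalerA mpolyXD.
Qed.

Lemma poly_pterm_sum (p : {poly Ky}) :
  p = \sum_(i < size p) \sum_(al <- msupp p`_i) pterm (p`_i@_al) al i.
Proof.
rewrite -{1}[p]coefK poly_def; apply: eq_bigr=> i _.
by rewrite -mul_polyC {1}[p`_i]mpolyE rmorph_sum mulr_suml.
Qed.

Lemma ps_of_poly1 : ps_of_poly 1 = 1.
Proof.
rewrite (_ : 1 = pterm 1 0%MM 0) ?ps_of_pterm; last by rewrite /pterm scale1r mpolyX0 mulr1.
apply: funext=> e; rewrite /ps_scale mul1r (_ : mkmon 0 0%MM = mzero) //.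
by apply/ffunP=> i; rewrite !ffunE; case: unlift=> // i'; rewrite mnm0E.
Qed.

Lemma ps_of_polyM : {morph ps_of_poly : p q / p * q}.
Proof.
have ptermM_r c al i q :
    ps_of_poly (pterm c al i * q) = ps_of_poly (pterm c al i) * ps_of_poly q.
  rewrite [q]poly_pterm_sum mulr_sumr !ps_of_poly_sum mulr_sumr; apply: eq_bigr=> j _.
  rewrite mulr_sumr !ps_of_poly_sum mulr_sumr; apply: eq_bigr=> be _.
  by rewrite ptermM !ps_of_pterm ps_scaleM ps_monM madd_mkmon.
move=> p q; rewrite [p]poly_pterm_sum mulr_suml !ps_of_poly_sum mulr_suml.
apply: eq_bigr=> i _; rewrite mulr_suml !ps_of_poly_sum mulr_suml.
by apply: eq_bigr=> al _; apply: ptermM_r.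
Qed.

HB.instance Definition _ :=
  GRing.isMonoidMorphism.Build {poly Ky} ps ps_of_poly (ps_of_poly1, ps_of_polyM).

Lemma ps_of_poly_inj : injective ps_of_poly.
Proof.
apply: raddf_inj=> p /= p0; apply/polyP=> i; apply/mpolyP=> al.
have := congr1 (fun s : ps => s (mkmon i al)) p0.
by rewrite /ps_of_poly mkmon0 ypart_mkmon coef0 mcoeff0.
Qed.

Lemma ps_of_poly_bounded (s : ps) B :
  (forall e, s e != 0 -> forall i, (e i <= B)%N) -> exists p, ps_of_poly p = s.
Proof.
move=> sB; pose mo := @bounded_mon m.+1 B.+1.
exists (\sum_(v : {ffun 'I_m.+1 -> 'I_B.+1}) pterm (s (mo v)) (ypart (mo v)) (mo v ord0)).
rewrite ps_of_poly_sum; apply: funext=> e; rewrite coefps_sum.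
under eq_bigr=> v _ do rewrite ps_of_pterm /ps_scale mkmon_eta ps_monE.
have [se0|/sB eB] := eqVneq (s e) 0.
  by rewrite big1 // => v _; case: eqP=> [<-|]; rewrite ?mulr1 ?mulr0.
have [|v <-] := @bounded_monP m.+1 B.+1 e; first by move=> i; rewrite ltnS.
rewrite (bigD1 v) //= eqxx mulr1 big1 ?addr0 // => w wv.
by case: eqP=> [/bounded_mon_inj wv'|]; rewrite ?mulr0 //; rewrite wv' eqxx in wv.
Qed.

Lemma ps_of_polyC (c : Ky) (e : mon) :
  ps_of_poly c%:P e = if e ord0 == 0%N then c@_(ypart e) else 0.
Proof. by rewrite /ps_of_poly coefC; case: eqP; rewrite ?mcoeff0. Qed.

End PolyEmbedding.

(** * The weight filtration *)

Section WeightedFiltration.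
Variables (K : fieldType) (m a b : nat) (g : ps K m.+1).
Hypothesis a_gt0 : (0 < a)%N.
Hypothesis b_gt0 : (0 < b)%N.
Hypothesis aK : (a%:R : K) != 0.
Hypothesis g_xfree : forall e : mon m.+1, e ord0 != 0%N -> g e = 0.
Hypothesis g_Qb : ideal_pow (@Yid K m) b g.
Hypothesis g_notQb1 : ~ ideal_pow (@Yid K m) b.+1 g.

Local Notation mon := (mon m.+1).
Local Notation ps := (ps K m.+1).
Local Notation pmon := (@ps_mon K m.+1).
Local Notation a' := (a' a b).
Local Notation b' := (b' a b).
Local Notation In := (@In K m a b g).
Local Notation Fid := (@Fid K m a g).
Local Notation Yid := (@Yid K m).
Local Notation x := (@xv K m).
Local Notation f := (@fA K m a g).

(* [x] has weight [b'] and every [y_i] weight [a'], so [I_n] is spanned by the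
   monomials of weight at least [n]. *)
Definition wxy : 'I_m.+1 -> nat := fun i => if i == ord0 then b' else a'.
Definition wy : 'I_m.+1 -> nat := fun i => if i == ord0 then 0%N else 1%N.
Definition wf := (a * b')%N.

Definition xmon k : mon := [ffun j => if j == ord0 then k else 0%N].
Definition ymon (i : 'I_m) : mon := [ffun j => (j == lift ord0 i : nat)].

Lemma wdeg_wxy (e : mon) :
  wdeg wxy e = (e ord0 * b' + (\sum_(i < m) e (lift ord0 i)) * a')%N.
Proof.
rewrite /wdeg big_ord_recl /wxy eqxx mulnC big_distrl /=; congr (_ + _)%N.
by apply: eq_bigr=> i _; rewrite mulnC.
Qed.

Lemma wdeg_wy (e : mon) : wdeg wy e = (\sum_(i < m) e (lift ord0 i))%N.
Proof.
by rewrite /wdeg big_ord_recl /wy eqxx mul0n add0n; apply: eq_bigr=> i _; rewrite mul1n.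
Qed.

Lemma wdeg_wxy_y (e : mon) : e ord0 = 0%N -> wdeg wxy e = (wdeg wy e * a')%N.
Proof. by move=> e0; rewrite wdeg_wxy wdeg_wy e0. Qed.

Lemma wdeg_xmon c k : wdeg c (xmon k) = (c ord0 * k)%N.
Proof.
rewrite /wdeg (bigD1 ord0) //= big1 ?addn0 ?ffunE ?eqxx // => i /negbTE i0.
by rewrite ffunE i0 muln0.
Qed.

Lemma wdeg_ymon c i : wdeg c (ymon i) = c (lift ord0 i).
Proof.
rewrite /wdeg (bigD1 (lift ord0 i)) //= big1 ?addn0 ?ffunE ?eqxx ?muln1 // => j /negbTE ji.
by rewrite ffunE ji muln0.
Qed.

Lemma a_eq : a = (a' * gcdn a b)%N.
Proof. by rewrite /a' /dd divnK // dvdn_gcdl. Qed.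

Lemma b_eq : b = (b' * gcdn a b)%N.
Proof. by rewrite /b' /dd divnK // dvdn_gcdr. Qed.

Lemma gcd_gt0 : (0 < gcdn a b)%N.
Proof. by rewrite gcdn_gt0 a_gt0. Qed.

Lemma a'_gt0 : (0 < a')%N.
Proof. by move: a_gt0; rewrite {1}a_eq muln_gt0 => /andP[]. Qed.

Lemma b'_gt0 : (0 < b')%N.
Proof. by move: b_gt0; rewrite {1}b_eq muln_gt0 => /andP[]. Qed.

Lemma wf_eq : wf = (b * a')%N.
Proof.
apply/eqP; rewrite -(eqn_pmul2r gcd_gt0) /wf.
by rewrite -!mulnA -b_eq -a_eq mulnC.
Qed.

Lemma xvX k : x ^+ k = pmon (xmon k).
Proof.
elim: k=> [|k IH].
  by rewrite expr0 -ps_mon0; congr pmon; apply/ffunP=> i; rewrite !ffunE; case: ifP.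
rewrite exprS IH ps_monM; congr pmon; apply: mon_ext=> i; rewrite !ffunE.
by case: ifP.
Qed.

Lemma yvE i : @yv K m i = pmon (ymon i).
Proof. by []. Qed.

Lemma fAE : f = x ^+ a - g.
Proof. by rewrite /fA ps_subE ps_expE. Qed.

Lemma In_is_ideal n : is_ideal (In n). Proof. exact: ideal_gen_is_ideal. Qed.
Lemma Fid_is_ideal : is_ideal Fid. Proof. exact: ideal_gen_is_ideal. Qed.

Lemma In_Fid n r : Fid r -> In n r.
Proof. by move=> Fr; apply: ideal_gen_in; left. Qed.

Lemma In_mon n e : (n <= wdeg wxy e)%N -> In n (pmon e).
Proof. by move=> ne; apply: ideal_gen_in; right; exists e; rewrite -wdeg_wxy. Qed.

Lemma In_wfilt n s : wfilt wxy n s -> In n s.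
Proof.
move=> sn; apply: (@ideal_mon_support K m.+1 _ (fun e => n <= wdeg wxy e)%N n).
- exact: In_is_ideal.
- by move=> e; apply: wdeg_mtrunc.
- exact: In_mon.
by move=> e /sn.
Qed.

Lemma In0 x : In 0 x.
Proof. by apply: In_wfilt=> e. Qed.

Lemma In_le p q x : (q <= p)%N -> In p x -> In q x.
Proof.
move=> qp; apply: ideal_gen_min; first exact: In_is_ideal.
move=> r [/In_Fid //|[e [pe ->]]]; apply: In_mon; rewrite wdeg_wxy.
exact: leq_trans pe.
Qed.

Lemma FidP r : Fid r <-> exists h, r = h * @fA K m a g.
Proof.
split=> [|[h ->]]; last by apply: (idlM Fid_is_ideal); apply: ideal_gen_in.
move: r; apply: ideal_gen_min=> [|_ ->]; last by exists 1; rewrite mul1r.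
split; first by exists 0; rewrite mul0r.
  by move=> x y [h1 ->] [h2 ->]; exists (h1 + h2); rewrite mulrDl.
by move=> s x [h ->]; exists (s * h); rewrite mulrA.
Qed.

Lemma InP n r : In n r <-> exists t, wfilt wxy n t /\ Fid (r - t).
Proof.
split=> [|[t [tn Frt]]]; last first.
  by apply: (idl_congr (In_is_ideal n) (In_wfilt tn)); apply: In_Fid.
move: r; apply: ideal_gen_min=> [|r' [Fr'|[e [ne ->]]]].
- split; first by exists 0; split; [exact: wfilt0 | rewrite subrr; exact: ig_zero].
    move=> x y [t1 [t1n F1]] [t2 [t2n F2]]; exists (t1 + t2); split; first exact: wfiltD.
    by rewrite opprD addrACA; apply: (idlD Fid_is_ideal).
  move=> s x [t [tn Fxt]]; exists (s * t); split; first exact: wfiltMl.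
  by rewrite -mulrBr; apply: (idlM Fid_is_ideal).
- by exists 0; split; [exact: wfilt0 | rewrite subr0].
exists (pmon e); split; last by rewrite subrr; exact: ig_zero.
by apply: (wfiltW (n := wdeg wxy e)); [rewrite wdeg_wxy | apply: wfilt_mon].
Qed.

Lemma InM i j x y : In i x -> In j y -> In (i + j)%N (x * y).
Proof.
move=> /InP[t [ti Fxt]] /InP[u [uj Fyu]]; apply/InP; exists (t * u).
split; first exact: wfiltM.
have -> : x * y - t * u = (x - t) * y + t * (y - u) by ring.
by apply: (idlD Fid_is_ideal); [apply: (idlMr Fid_is_ideal) | apply: (idlM Fid_is_ideal)].
Qed.

Lemma InMW i j k x y : (k <= i + j)%N -> In i x -> In j y -> In k (x * y).
Proof. by move=> kij xi yj; apply: In_le kij _; apply: InM. Qed.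

Lemma InX n k x : In n x -> In (n * k)%N (x ^+ k).
Proof.
move=> xn; elim: k=> [|k IH]; first by rewrite muln0; apply: In0.
by rewrite exprS mulnS; apply: InM.
Qed.

Lemma Yid_pow1 i : ideal_pow Yid 1 (@yv K m i).
Proof.
apply: ideal_gen_in; exists 1, (@yv K m i); split=> //; split; last by rewrite ps_mulE mul1r.
by apply: ideal_gen_in; exists i.
Qed.

Lemma Yid_pow_mon k (e : mon) : wdeg wy e = k -> ideal_pow Yid k (pmon e).
Proof.
elim: k e=> [//|k IH] e ek.
have [i ei] : exists i, (0 < e (lift ord0 i))%N.
  apply/existsP; apply: contraT; rewrite negb_exists=> /forallP e0.
  by move: ek; rewrite wdeg_wy big1 // => i _; have := e0 i; rewrite lt0n negbK=> /eqP.
have eE : e = madd (ymon i) (msub e (ymon i)).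
  by rewrite madd_msub //; apply/mleP=> j; rewrite ffunE; case: eqP=> [->|].
rewrite eE -ps_monM -yvE -[k.+1]add1n; apply: ideal_powM; first exact: Yid_pow1.
apply: IH; move: ek; rewrite {1}eE wdegD wdeg_ymon /wy eq_sym (negbTE (neq_lift _ _)).
by move=> /eqP; rewrite add1n eqSS=> /eqP.
Qed.

Lemma Yid_powP p s : ideal_pow Yid p s <-> wfilt wy p s.
Proof.
split=> [|sp].
  rewrite -{2}[p]mul1n; apply: (@ideal_pow_filt K m.+1 _ (wfilt wy)).
  - exact: wfilt_is_ideal.
  - by move=> x e.
  - by move=> k l x y; apply: wfiltM.
  move=> y; apply: ideal_gen_min; first exact: wfilt_is_ideal.
  move=> _ [i ->]; rewrite yvE; have := @wfilt_mon K _ wy (ymon i).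
  by rewrite wdeg_ymon /wy eq_sym (negbTE (neq_lift _ _)).
apply: (@ideal_mon_support K m.+1 _ (fun e => p <= wdeg wy e)%N p).
- exact: ideal_pow_is_ideal.
- by move=> e; apply: wdeg_mtrunc.
- by move=> e pe; apply: (ideal_pow_le pe); apply: Yid_pow_mon.
by move=> e /sp.
Qed.

Lemma g_x0 (e : mon) : g e != 0 -> e ord0 = 0%N.
Proof. by move=> ge; apply/eqP; apply: contraT=> /g_xfree ge0; rewrite ge0 eqxx in ge. Qed.

Lemma wfilt_g : wfilt wxy wf g.
Proof.
move=> e ge; rewrite wdeg_wxy_y ?g_x0 // wf_eq leq_mul2r.
by move/Yid_powP: g_Qb=> /(_ e ge) ->; rewrite orbT.
Qed.

Definition gin := wcomp wxy wf g.
Definition fin := x ^+ a - gin.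

Lemma wcomp_xa : wcomp wxy wf (x ^+ a) = x ^+ a.
Proof. by rewrite xvX wcomp_mon wdeg_xmon /wxy eqxx mulnC eqxx. Qed.

Lemma wfilt_f : wfilt wxy wf f.
Proof.
by rewrite fAE; apply: wfiltB; [rewrite -wcomp_xa; exact: wfilt_wcomp | exact: wfilt_g].
Qed.

Lemma wcomp_f : wcomp wxy wf f = fin.
Proof. by rewrite fAE wcompB wcomp_xa. Qed.

Lemma wfilt_fin : wfilt wxy wf fin.
Proof. by rewrite -wcomp_f; exact: wfilt_wcomp. Qed.

Lemma wcomp_fin : wcomp wxy wf fin = fin.
Proof. by rewrite -wcomp_f wcomp_id. Qed.

Lemma wfilt_g_sub_gin : wfilt wxy wf.+1 (g - gin).
Proof. exact: wfilt_sub_wcomp wfilt_g. Qed.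

Lemma finE : fin = f + (g - gin).
Proof. by rewrite /fin fAE; ring. Qed.

Lemma gin_neq0 : gin != 0.
Proof.
apply/eqP=> gin0; apply: g_notQb1; apply/Yid_powP=> e ge.
have := wfilt_g_sub_gin; rewrite gin0 subr0 => /(_ e ge).
by rewrite wdeg_wxy_y ?g_x0 // wf_eq ltn_mul2r => /andP[].
Qed.

Lemma wcomp_bounded w (s : ps) (e : mon) : wcomp wxy w s e != 0 -> forall i, (e i <= w)%N.
Proof.
rewrite /wcomp; case: (eqVneq (wdeg wxy e) w)=> [<- _ i|_]; last by rewrite eqxx.
rewrite /wdeg (bigD1 i) //=; apply: leq_trans (leq_addr _ _).
rewrite -{1}[e i]mul1n leq_mul2r /wxy.
by case: ifP=> _; rewrite ?b'_gt0 ?a'_gt0 orbT.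
Qed.

Lemma wcomp_poly w (s : ps) : exists p, ps_of_poly p = wcomp wxy w s.
Proof. by apply: ps_of_poly_bounded; apply: wcomp_bounded. Qed.

Lemma fin_poly : exists G : {mpoly K[m]}, G != 0 /\ ps_of_poly ('X^a - G%:P) = fin.
Proof.
have [p pE] := wcomp_poly wf g; exists p`_0.
have p0E : ps_of_poly (p`_0)%:P = gin.
  apply: funext=> e; rewrite ps_of_polyC; case: eqP=> [e0|/eqP e0].
    by rewrite /gin -pE /ps_of_poly e0.
  by rewrite /gin /wcomp g_xfree //; case: ifP.
split; first by apply: contra_neq gin_neq0=> p0; rewrite -p0E p0 raddf0.
rewrite rmorphB /= p0E /fin xvX; congr (_ - _).
rewrite (_ : 'X^a = pterm 1 0%MM a) ?ps_of_pterm; last by rewrite /pterm scale1r mpolyX0 mul1r.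
apply: funext=> e; rewrite /ps_scale mul1r; congr (pmon _ e).
by apply/ffunP=> i; rewrite !ffunE; case: unliftP=> [j ->|->]; rewrite ?mnm0E.
Qed.

Lemma wcomp_fin_neq0 w (s : ps) : wcomp wxy w s != 0 -> wcomp wxy w s * fin != 0.
Proof.
move=> s0; have [G [G0 GE]] := fin_poly; have [p pE] := wcomp_poly w s.
have p0 : p != 0 by apply: contra_neq s0=> p0; rewrite -pE p0 raddf0.
have P0 : ('X^a - G%:P : {poly {mpoly K[m]}}) != 0 by rewrite monic_neq0 ?monicXnsubC.
rewrite -pE -GE -rmorphM; apply: contra_neq (mulf_neq0 p0 P0)=> pP0.
by apply: ps_of_poly_inj; rewrite pP0 raddf0.
Qed.

Lemma fin_dvd_exp w w' (s h : ps) k :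
  wcomp wxy w s ^+ k = wcomp wxy w' h * fin -> exists q, wcomp wxy w s = q * fin.
Proof.
move=> shk; have [G [G0 GE]] := fin_poly.
have [p pE] := wcomp_poly w s; have [q qE] := wcomp_poly w' h.
have pq : p ^+ k = q * ('X^a - G%:P).
  by apply: ps_of_poly_inj; rewrite rmorphXn rmorphM /= pE qE GE.
have aKy : (a%:R : {mpoly K[m]}) != 0 by rewrite -mpolyC_nat mpolyC_eq0.
have [Q QE] := XnsubC_dvd_exp a_gt0 aKy G0 pq.
by exists (ps_of_poly Q); rewrite -pE QE rmorphM /= GE.
Qed.

(* [fin] is not a zero divisor on initial forms, so dividing by a series with
   initial form [fin] lowers the weight by exactly [wf]. *)
Lemma wfilt_cancel_fin (phi h : ps) V :
  wfilt wxy wf phi -> wcomp wxy wf phi = fin -> wfilt wxy (V + wf) (h * phi) ->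
  wfilt wxy V h.
Proof.
move=> phi_wf phiE hphi; elim: V => [|j IH] in hphi *; first by move=> e.
have hj : wfilt wxy j h by apply: IH; apply: wfiltW hphi; rewrite addSn.
have hj0 : wcomp wxy j h = 0.
  apply/eqP; apply: contraT=> /wcomp_fin_neq0; rewrite -phiE -wcompM //.
  by rewrite wcomp_eq0 ?eqxx // -addSn.
by have := wfilt_sub_wcomp hj; rewrite hj0 subr0.
Qed.

Lemma initial_form_dvd n k (t : ps) :
  wfilt wxy n t -> In (n * k)%N.+1 (t ^+ k) -> exists q, wcomp wxy n t = q * fin.
Proof.
move=> tn /InP[s [snk /FidP[h hE]]].
have rhoE : wcomp wxy n t ^+ k = wcomp wxy (n * k)%N (h * f).
  by rewrite -wcompX // -hE wcompB (wcomp_eq0 snk) subr0.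
suff [w' [h' rho_fin]] : exists w' h', wcomp wxy n t ^+ k = wcomp wxy w' h' * fin.
  exact: fin_dvd_exp rho_fin.
have [wf_le|nk_lt] := leqP wf (n * k)%N; last first.
  exists 0%N, 0; rewrite wcomp0 mul0r rhoE wcomp_eq0 //.
  exact: wfiltW nk_lt (wfiltMl wfilt_f).
have hfnk : wfilt wxy (n * k - wf + wf)%N (h * f).
  by rewrite subnK // -hE; apply: wfiltB; [exact: wfiltX | exact: wfiltW snk].
have hn := wfilt_cancel_fin wfilt_f wcomp_f hfnk.
exists (n * k - wf)%N, h; rewrite rhoE -wcomp_f -wcompM ?subnK //; exact: wfilt_f.
Qed.

Lemma In_succ_of_initial_dvd n (t q : ps) :
  wfilt wxy n t -> wcomp wxy n t = q * fin -> In n.+1 t.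
Proof.
move=> tn tq; have [n_lt|wf_le] := ltnP n wf.
  have t0 : wcomp wxy n t = 0.
    rewrite -wcomp_id; apply: wcomp_eq0; rewrite tq.
    exact: wfiltW n_lt (wfiltMl wfilt_fin).
  by apply: In_wfilt; have := wfilt_sub_wcomp tn; rewrite t0 subr0.
have qn : wfilt wxy (n - wf)%N q.
  by apply: (wfilt_cancel_fin wfilt_fin wcomp_fin); rewrite subnK // -tq; exact: wfilt_wcomp.
apply/InP; exists ((t - wcomp wxy n t) + q * (g - gin)); split.
  apply: wfiltD; first exact: wfilt_sub_wcomp.
  by have := wfiltM qn wfilt_g_sub_gin; rewrite addnS subnK.
have -> : t - (t - wcomp wxy n t + q * (g - gin)) = q * f by rewrite tq finE; ring.
by apply/FidP; exists q.
Qed.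

(* Pointwise form of the reducedness of [G(I)]. *)
Lemma In_succ_of_exp n k (r : ps) :
  (0 < k)%N -> In n r -> In (n * k)%N.+1 (r ^+ k) -> In n.+1 r.
Proof.
move=> k_gt0 /InP[t [tn Frt]] rk.
have tk : In (n * k)%N.+1 (t ^+ k).
  apply: (idl_congr (In_is_ideal _) rk); rewrite -opprB subrXX.
  by apply/(idlN (In_is_ideal _))/In_Fid/(idlMr Fid_is_ideal).
have [q tq] := initial_form_dvd tn tk.
apply: (idl_congr (In_is_ideal _) (In_succ_of_initial_dvd tn tq)).
exact: In_Fid.
Qed.

Lemma gr_mulE (r s : nat -> ps) n :
  gr_mul r s n = \sum_(i <- iota 0 n.+1) r i * s (n - i)%N.
Proof. by rewrite /gr_mul ps_sumE big_map. Qed.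

Lemma gr_mul_In (r s : nat -> ps) :
  (forall n, In n (r n)) -> (forall n, In n (s n)) -> forall n, In n (gr_mul r s n).
Proof.
move=> rn sn n; rewrite gr_mulE; apply: idl_sum_seq=> [|i]; first exact: In_is_ideal.
rewrite mem_iota ltnS=> /andP[_ i_le].
by apply: (InMW (i := i) (j := (n - i)%N)); rewrite ?subnKC.
Qed.

Lemma gr_pow_In (r : nat -> ps) :
  (forall n, In n (r n)) -> forall k n, In n (gr_pow r k.+1 n).
Proof. by move=> rn; elim=> [|k IH] n //; apply: gr_mul_In. Qed.

Lemma gr_pow_low (r : nat -> ps) n0 : (forall n, In n (r n)) ->
  (forall i, (i < n0)%N -> In i.+1 (r i)) ->
  forall j, (forall n, (n < n0 * j.+1)%N -> In n.+1 (gr_pow r j.+1 n)) /\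
            In (n0 * j.+1)%N.+1 (gr_pow r j.+1 (n0 * j.+1)%N - r n0 ^+ j.+1).
Proof.
move=> rn r_low; elim=> [|j [IH_low IH_top]].
  split; first by move=> n; rewrite muln1; apply: r_low.
  by rewrite muln1 /gr_pow /= expr1 subrr; apply: (idl0 (In_is_ideal _)).
have pow_n := gr_pow_In rn j.
have other_terms n i : (i <= n)%N -> (n <= n0 * j.+2)%N -> i != n0 ->
    In n.+1 (r i * gr_pow r j.+1 (n - i)%N).
  move=> i_le n_le i_n0; have [i_lt|i_gt] := ltnP i n0.
    by apply: (InMW (i := i.+1) (j := (n - i)%N)); [lia | exact: r_low | exact: pow_n].
  apply: (InMW (i := i) (j := (n - i).+1)); [lia | exact: rn | apply: IH_low].
  by move: i_gt n_le; rewrite leq_eqVlt eq_sym (negbTE i_n0) mulnS /=; lia.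
split=> [n n_lt|].
  rewrite /gr_pow /= -/(gr_pow r j.+1) gr_mulE.
  apply: idl_sum_seq=> [|i]; first exact: In_is_ideal.
  rewrite mem_iota ltnS=> /andP[_ i_le]; have [->|] := eqVneq i n0; last first.
    by apply: other_terms=> //; apply: ltnW.
  apply: (InMW (i := n0) (j := (n - n0).+1)); [lia | exact: rn | apply: IH_low].
  by move: n_lt; rewrite mulnS; lia.
set n := (n0 * j.+2)%N.
have n0_le : (n0 <= n)%N by rewrite /n mulnS leq_addr.
have n_sub : (n - n0)%N = (n0 * j.+1)%N by rewrite /n mulnS addKn.
rewrite /gr_pow /= -/(gr_pow r j.+1) gr_mulE.
rewrite (bigD1_seq n0) ?iota_uniq ?mem_iota ?add0n ?ltnS // addrAC.
apply: (idlD (In_is_ideal _)).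
  rewrite n_sub exprS -mulrBr; apply: (InMW (i := n0) (j := (n0 * j.+1).+1))=> //.
  by rewrite /n mulnS addnS.
rewrite big_seq_cond; apply: idl_sum=> [|i /andP[]]; first exact: In_is_ideal.
by rewrite mem_iota add0n ltnS=> /andP[_ i_le] i_n0; apply: other_terms.
Qed.

(* By strong induction on the degree: once the components of [r] below [n0]
   vanish in [G(I)], the component of [r ^ k] of degree [n0 k] is [r n0 ^ k]. *)
Lemma gr_reduced_In : gr_reduced In.
Proof.
move=> r rn _ k k_gt0 rk0 n; elim/ltn_ind: n=> n0 IH.
have [_ top] := gr_pow_low rn IH k.-1; rewrite prednK // in top.
apply: (In_succ_of_exp k_gt0 (rn n0)).
apply: (idl_congr (In_is_ideal _) (rk0 (n0 * k)%N)).
by rewrite -opprB; apply: (idlN (In_is_ideal _)).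
Qed.

Lemma qpow_In n i c : qpow Fid (In n) i c -> In (n * i)%N c.
Proof.
move: c; apply: ideal_gen_min=> [|y [|/In_Fid //]]; first exact: In_is_ideal.
apply: (@ideal_pow_filt K m.+1 _ In)=> //; [exact: In_is_ideal | exact: In0 | exact: InM].
Qed.

Lemma In_jump n r : ~ In n r -> exists j, [/\ (j < n)%N, In j r & ~ In j.+1 r].
Proof.
elim: n=> [/(_ (In0 r))//|n IH] r_notIn; have [rn|/IH[j [jn rj rj1]]] := pselect (In n r).
  by exists n.
by exists j; split=> //; apply: ltnW.
Qed.

(* If [r] is integral over [I_n] but only lies in [I_j] with [j < n], the
   equation of integral dependence puts [r ^ k] in [I_(jk+1)]. *)
Lemma qclosure_In n r : (0 < n)%N -> qclosure Fid (In n) r <-> In n r.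
Proof.
move=> n_gt0; split=> [[k [c [k_gt0 [cn rc]]]]|rn].
  apply: contrapT=> /In_jump[j [jn rj rj1]]; apply: rj1.
  apply: (In_succ_of_exp k_gt0 rj).
  set S := ps_sum _ in rc.
  have Sjk : In (j * k)%N.+1 S.
    rewrite /S ps_sumE big_map; apply: idl_sum_seq=> [|i]; first exact: In_is_ideal.
    rewrite mem_iota=> /andP[i_gt0 i_lt]; rewrite ps_mulE ps_expE.
    have i_le : (i <= k)%N by rewrite addnC in i_lt; lia.
    apply: (InMW (i := (n * i)%N) (j := (j * (k - i))%N)).
    - have : (j.+1 * i <= n * i)%N by rewrite leq_mul2r jn orbT.
      have : (j * i + j * (k - i) = j * k)%N by rewrite -mulnDr subnKC.
      by rewrite mulSn; lia.
    - by apply: qpow_In; apply: cn; rewrite i_gt0.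
    exact: InX.
  apply: (idl_congr (In_is_ideal _) (In_Fid _ rc)).
  by rewrite ps_addE ps_expE opprD addNKr; apply: (idlN (In_is_ideal _)).
exists 1%N, (fun _ => - r); split=> //; split.
  move=> i /andP[i_gt0 i_le1]; have -> : i = 1%N by apply/eqP; rewrite eqn_leq i_le1.
  apply: ideal_gen_in; left; apply: ideal_gen_in; exists 1, (- r).
  by rewrite ps_mulE mul1r; split=> //; split=> //; apply: (idlN (In_is_ideal _)).
rewrite ps_addE ps_sumE big_map big_seq1 ps_mulE !ps_expE subnn expr1 expr0 mulr1.
by rewrite subrr; apply: ig_zero.
Qed.

Local Notation Qp := (@Qp K m a g).
Local Notation Jn := (@Jn K m a b g).

Lemma nk_eq k : nk a b k = (k * b' %/ a')%N.
Proof. by rewrite /nk -(@divnMr (gcdn a b) (k * b') a' gcd_gt0) -mulnA -b_eq -a_eq. Qed.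

Lemma In_Yid y : Yid y -> In a' y.
Proof.
move: y; apply: ideal_gen_min=> [|_ [i ->]]; first exact: In_is_ideal.
by rewrite yvE; apply: In_mon; rewrite wdeg_ymon /wxy eq_sym (negbTE (neq_lift _ _)).
Qed.

Lemma In_Qp j q : Qp j q -> In (j * a')%N q.
Proof.
move: q; apply: ideal_gen_min=> [|y [|/In_Fid //]]; first exact: In_is_ideal.
rewrite mulnC; apply: (@ideal_pow_filt K m.+1 _ In)=> //.
- exact: In_is_ideal.
- exact: In0.
- exact: InM.
exact: In_Yid.
Qed.

Lemma In_Jn n r : Jn n r -> In (n * a')%N r.
Proof.
move: r; apply: ideal_gen_min=> [|y [/In_Fid //|[/In_Qp //|[k [q [k_bd [qn ->]]]]]]].
  exact: In_is_ideal.
rewrite ps_mulE ps_expE xvX.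
apply: (InMW (i := (k * b')%N) (j := ((n - nk a b k) * a')%N)).
- by rewrite nk_eq mulnBl; have := leq_trunc_div (k * b') a'; lia.
- by apply: In_mon; rewrite wdeg_xmon /wxy eqxx mulnC.
exact: In_Qp.
Qed.

Lemma Jn_is_ideal n : is_ideal (Jn n). Proof. exact: ideal_gen_is_ideal. Qed.

Lemma Jn_Fid n r : Fid r -> Jn n r. Proof. by move=> Fr; apply: ideal_gen_in; left. Qed.

Lemma Yid_pow_gX q : ideal_pow Yid (b * q)%N (g ^+ q).
Proof.
elim: q=> [|q IH]; first by rewrite muln0.
by rewrite exprS mulnS; apply: ideal_powM.
Qed.

(* Writing [e ord0 = q a + j] with [j < a], modulo [f] the monomial
   [x^(e ord0) y^al] is [x^j g^q y^al], and [g^q y^al] lies in [Q^(bq + |al|)]. *)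
Lemma Jn_mon n e : (n * a' <= wdeg wxy e)%N -> Jn n (pmon e).
Proof.
move=> ne; set e0 := e ord0; set q := (e0 %/ a)%N; set j := (e0 %% a)%N.
pose ey : mon := [ffun i => if i == ord0 then 0%N else e i].
pose Y := pmon ey; set al := (\sum_(i < m) e (lift ord0 i))%N.
have eE : e = madd (xmon e0) ey.
  by apply: mon_ext=> i; rewrite !ffunE; case: eqP=> [->|]; rewrite ?addn0.
have e0E : e0 = (q * a + j)%N by apply: divn_eq.
have wdeg_ey : wdeg wy ey = al.
  by rewrite wdeg_wy; apply: eq_bigr=> i _; rewrite ffunE eq_sym (negbTE (neq_lift _ _)).
have eqf : pmon e = x ^+ j * (g ^+ q * Y) + x ^+ j * Y * ((x ^+ a) ^+ q - g ^+ q).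
  rewrite eE -ps_monM -xvX e0E exprD mulnC exprM -/Y.
  by move: (x ^+ a ^+ q) (x ^+ j) (g ^+ q) Y=> u v w y; ring.
rewrite eqf; apply: (idlD (Jn_is_ideal n)); last first.
  apply/Jn_Fid/(idlM Fid_is_ideal); rewrite subrXX; apply: (idlMr Fid_is_ideal).
  by rewrite -fAE; apply: ideal_gen_in.
have gYQ : ideal_pow Yid (b * q + al)%N (g ^+ q * Y).
  by apply: ideal_powM; [exact: Yid_pow_gX | exact: Yid_pow_mon].
have n_le : (n * a' <= (b * q + al) * a' + j * b')%N.
  move: ne; rewrite wdeg_wxy -/e0 -/al e0E mulnDl mulnDl -mulnA -/wf wf_eq mulnA.
  by rewrite [(q * b)%N]mulnC; lia.
have [j0|j_gt0] := posnP j.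
  have n_le' : (n <= b * q + al)%N.
    by rewrite -(leq_pmul2r a'_gt0); move: n_le; rewrite j0 mul0n addn0.
  rewrite j0 expr0 mul1r; apply: ideal_gen_in; right; left.
  by apply: ideal_gen_in; left; apply: ideal_pow_le n_le' gYQ.
apply: ideal_gen_in; right; right; exists j, (g ^+ q * Y); split.
  by rewrite j_gt0 /=; have := ltn_pmod e0 a_gt0; rewrite -/j; lia.
split; last by rewrite ps_mulE ps_expE.
apply: ideal_gen_in; left; apply: ideal_pow_le gYQ.
have : (n - (b * q + al) <= nk a b j)%N.
  by rewrite nk_eq leq_divRL ?a'_gt0 // mulnBl; lia.
lia.
Qed.

Lemma Jn_In n r : In (n * a')%N r -> Jn n r.
Proof.
move: r; apply: ideal_gen_min=> [|y [/Jn_Fid //|[e [ne ->]]]]; first exact: Jn_is_ideal.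
by apply: Jn_mon; rewrite wdeg_wxy.
Qed.

Lemma Jn_eq n : Jn n = In (n * a')%N.
Proof. by apply: funext=> r; apply: propext; split; [apply: In_Jn | apply: Jn_In]. Qed.

Lemma qclosure_Jn n r : (0 < n)%N -> qclosure Fid (Jn n) r <-> Jn n r.
Proof. by move=> n_gt0; rewrite Jn_eq; apply: qclosure_In; rewrite muln_gt0 n_gt0 a'_gt0. Qed.

End WeightedFiltration.

Theorem proposition5p4 (K : closedFieldType) (m a b : nat) (g : ps K m.+1)
  (hm : (1 <= m)%N) (ha : (2 <= a)%N) (hab : (a <= b)%N)
  (haK : (a%:R : K) != 0)
  (hgy : forall e : mon m.+1, e ord0 != 0%N -> g e = 0)
  (hgb : ideal_pow (@Yid K m) b g) (hgb1 : ~ ideal_pow (@Yid K m) b.+1 g) :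
  gr_reduced (@In K m a b g)
  /\ (forall n, (1 <= n)%N -> forall r,
        @qclosure K m.+1 (@Fid K m a g) (@In K m a b g n) r <-> @In K m a b g n r)
  /\ (forall n, (1 <= n)%N -> forall r,
        @qclosure K m.+1 (@Fid K m a g) (@Jn K m a b g n) r <-> @Jn K m a b g n r).
Proof.
have a_gt0 : (0 < a)%N by apply: leq_trans ha.
have b_gt0 : (0 < b)%N by apply: leq_trans hab.
split; first exact: gr_reduced_In.
by split=> n n_gt0 r; [apply: qclosure_In | apply: qclosure_Jn].
Qed.
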